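(* Let $n\ge 2$, let $P\subset B_\infty^d(1)$ with $|P|=n$, and let $\sigma:P\to\{-1,+1\}$. Let $\rho$ be an integer with $\rho+1\ge 2e^2d(\sqrt{3\log n}+3)+\log n+2d$, and define the polynomial \[\mathcal{P}_{P,\rho}(x)=\sum_{k=0}^{\rho}\frac{2^k}{k!}\sum_{p\in P}\sigma(p)e^{-\|p\|^2}\langle p,x\rangle^k .\] Then for every $x\in B_\infty^d(\sqrt{3\log n}+3)$, \[\left|\sum_{p\in P}\sigma(p)e^{2\|p\|^2}e^{-\frac13\|x-3p\|^2}-e^{-\frac13\|x\|^2}\mathcal{P}_{P,\rho}(x)\right|\le 1.\]
   Context: $\log$ is the natural logarithm. $B_\infty^d(r)=\{x\in\mathbb{R}^d:|x_j|<r\text{ for all }j\}$. $\|\cdot\|$ is the Euclidean norm and $\langle\cdot,\cdot\rangle$ the standard inner product. *)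

From HB Require Import structures.
From mathcomp Require Import all_boot all_order all_algebra.
From mathcomp Require Import all_classical all_reals all_analysis.
Set Implicit Arguments. Unset Strict Implicit. Unset Printing Implicit Defensive.
Import Order.TTheory GRing.Theory Num.Theory.
Local Open Scope ring_scope.

Definition dotp {R : realType} {d : nat} (u v : 'rV[R]_d) : R :=
  \sum_(i < d) u 0 i * v 0 i.

Definition sqnorm {R : realType} {d : nat} (v : 'rV[R]_d) : R := dotp v v.

Definition in_Binf {R : realType} {d : nat} (r : R) (x : 'rV[R]_d) : Prop :=
  forall j : 'I_d, `|x 0 j| < r.

Definition calP {R : realType} {d : nat} (P : seq 'rV[R]_d)
  (sigma : 'rV[R]_d -> R) (rho : nat) (x : 'rV[R]_d) : R :=
  \sum_(0 <= k < rho.+1)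
    (2 ^+ k / (k`!)%:R) *
    \sum_(p <- P) sigma p * expR (- sqnorm p) * (dotp p x) ^+ k.

From HB Require Import structures.
From mathcomp Require Import all_boot all_order all_algebra.
From mathcomp Require Import all_classical all_reals all_analysis.
From mathcomp Require Import ring lra.
Import Order.TTheory GRing.Theory Num.Theory.
Local Open Scope ring_scope.

(* Completing the square,
     e^(2||p||^2) e^(-||x-3p||^2/3) = e^(-||x||^2/3) e^(-||p||^2) e^(2<p,x>),
   and calP is exactly sum_p sigma(p) e^(-||p||^2) T_rho(2<p,x>), where T_rho is
   the degree-rho Taylor polynomial of exp.  Hence the error equals
   e^(-||x||^2/3) sum_p sigma(p) e^(-||p||^2) (e^t_p - T_rho(t_p)), t_p = 2<p,x>.
   The Gaussian factor and the weights have modulus at most 1, and for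
   x in B_oo(r), r = sqrt(3 log n) + 3, we have |t_p| <= 2dr, so the hypothesis
   on rho yields e^2|t_p| + log n <= rho + 1.  The file first proves the Taylor
   remainder estimate: if e^2|t| + c <= K then |e^t - T_(K-1)(t)| <= e^(-c)
   (each coefficient past K is at most e^(-c) e^(-k), a geometric tail).  With
   c = log n every summand is at most 1/n, and the n summands add up to 1. *)

Section GaussianTaylor.
Variable R : realType.

Definition exp_taylor (t : R) (K : nat) : R := \sum_(0 <= k < K) t ^+ k / k`!%:R.

Lemma geometric_half_le (q : R) (m : nat) : 0 <= q -> 2 * q <= 1 ->
  \sum_(0 <= k < m) q ^+ k.+1 <= 1 - q ^+ m.
Proof.
move=> q_ge0 q_half; elim: m => [|m IH]; first by rewrite big_nil expr0 subrr.
rewrite big_nat_recl // expr1.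
have -> : \sum_(0 <= k < m) q ^+ k.+2 = q * \sum_(0 <= k < m) q ^+ k.+1.
  by rewrite mulr_sumr; apply: eq_bigr => k _; rewrite exprS.
have qm_ge0 : 0 <= q ^+ m by rewrite exprn_ge0.
have := ler_wpM2l q_ge0 IH; rewrite exprS; nra.
Qed.

Lemma geometric_tail_le1 (q : R) (K N : nat) : 0 <= q -> 2 * q <= 1 -> (0 < K)%N ->
  \sum_(K <= k < N) q ^+ k <= 1.
Proof.
move=> q_ge0 q_half K_gt0.
have [KN|NK] := leqP K N; last by rewrite big_geq ?ler01 // ltnW.
apply: (@le_trans _ _ (\sum_(1 <= k < N) q ^+ k)).
  rewrite (@big_cat_nat _ _ _ K 1 N) //= lerDr.
  by apply: sumr_ge0 => k _; rewrite exprn_ge0.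
rewrite big_add1 /=; apply: le_trans (geometric_half_le q N.-1 q_ge0 q_half) _.
by rewrite lerBlDr lerDl exprn_ge0.
Qed.

(* e >= 2, so the ratio e^(-1) of the coefficient bounds is at most 1/2. *)
Lemma expR1_ge2 : 2 <= expR (1 : R).
Proof. have := expR_ge1Dx (1 : R); lra. Qed.

(* A single Taylor coefficient past the threshold e^2 a + c <= k is at most
   e^(-c) e^(-k), because (e^2 a)^k / k! <= exp(e^2 a) <= e^(k-c). *)
Lemma exp_coeff_bound (a c : R) (k : nat) : 0 <= a -> (0 < k)%N ->
  expR 1 ^+ 2 * a + c <= k%:R ->
  a ^+ k / k`!%:R <= expR (- c) * expR (-1) ^+ k.
Proof.
case: k => // k a_ge0 _ hk.
have e2 : expR 1 ^+ 2 = expR (2 : R) by rewrite -expRM_natl mulr1.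
rewrite e2 in hk.
have big_coeff : (expR 2 * a) ^+ k.+1 / k.+1`!%:R <= expR (k.+1%:R - c).
  have := expR_ge1Dxn k (mulr_ge0 (expR_ge0 2) a_ge0).
  have : expR (expR 2 * a) <= expR (k.+1%:R - c) by rewrite ler_expR; lra.
  lra.
have scale : expR (- 2 * k.+1%:R) * expR 2 ^+ k.+1 = 1 :> R.
  by rewrite -expRM_natl -expRD -[RHS]expR0; congr expR; ring.
have -> : a ^+ k.+1 / k.+1`!%:R
    = expR (- 2 * k.+1%:R) * ((expR 2 * a) ^+ k.+1 / k.+1`!%:R).
  by rewrite exprMn mulrA mulrA scale mul1r.
have -> : expR (- c) * expR (-1) ^+ k.+1 = expR (- 2 * k.+1%:R) * expR (k.+1%:R - c).
  by rewrite -expRM_natl -!expRD; congr expR; ring.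
by rewrite ler_pM2l ?expR_gt0.
Qed.

(* Taylor polynomials of exp past the threshold change by at most e^(-c):
   the increment is a sum of coefficients bounded by e^(-c) e^(-k), and the
   ratio e^(-1) is at most 1/2. *)
Lemma exp_taylor_increment (t c : R) (K N : nat) : (0 < K)%N -> (K <= N)%N ->
  expR 1 ^+ 2 * `|t| + c <= K%:R ->
  `|exp_taylor t N - exp_taylor t K| <= expR (- c).
Proof.
move=> K_gt0 KN hK.
rewrite /exp_taylor (@big_cat_nat _ _ _ K 0 N _ _ (leq0n K) KN) /= addrC addrK.
apply: le_trans (ler_norm_sum _ _ _) _.
apply: (@le_trans _ _ (\sum_(K <= k < N) expR (- c) * expR (-1) ^+ k)).
  rewrite big_nat [X in _ <= X]big_nat; apply: ler_sum => k /andP[Kk _].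
  rewrite normrM normfV normr_nat normrX.
  apply: exp_coeff_bound; first exact: normr_ge0.
    exact: leq_trans Kk.
  by apply: le_trans hK _; rewrite ler_nat.
rewrite -mulr_sumr -[X in _ <= X]mulr1 ler_wpM2l ?expR_ge0 //.
apply: (geometric_tail_le1 _ _ _ (expR_ge0 _) _ K_gt0).
rewrite expRN -ler_pdivlMr ?invr_gt0 ?expR_gt0 // mul1r invrK.
exact: expR1_ge2.
Qed.

(* Taylor remainder estimate for exp, obtained by letting N -> oo above:
   if e^2|t| + c <= K then |e^t - sum_(k<K) t^k/k!| <= e^(-c). *)
Lemma exp_taylor_error (t c : R) (K : nat) : (0 < K)%N ->
  expR 1 ^+ 2 * `|t| + c <= K%:R ->
  `|expR t - exp_taylor t K| <= expR (- c).
Proof.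
move=> K_gt0 hK.
have near_T (N : nat) : (K <= N)%N ->
    exp_taylor t K - expR (- c) <= series (exp_coeff t) N <= exp_taylor t K + expR (- c).
  move=> KN; have := exp_taylor_increment _ _ _ _ K_gt0 KN hK.
  by rewrite ler_distl.
have cv := is_cvg_series_exp_coeff t.
rewrite ler_distl; apply/andP; split.
- by apply: limr_ge cv _; exists K => // N /= /near_T /andP[].
- by apply: limr_le cv _; exists K => // N /= /near_T /andP[].
Qed.

Section GaussianSum.
Variable d : nat.
Implicit Types (p x : 'rV[R]_d) (P : seq 'rV[R]_d).

Lemma sqnorm_ge0 x : 0 <= sqnorm x.
Proof. by apply: sumr_ge0 => i _; rewrite -expr2 sqr_ge0. Qed.

Lemma sqnorm_sub_scale (a : R) x p :
  sqnorm (x - a *: p) = sqnorm x - 2 * a * dotp p x + a ^+ 2 * sqnorm p.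
Proof.
rewrite /sqnorm /dotp !mulr_sumr -sumrN -!big_split /=.
by apply: eq_bigr => i _; rewrite !mxE; ring.
Qed.

Lemma dotp_Binf_bound (s r : R) p x :
  in_Binf s p -> in_Binf r x -> `|dotp p x| <= d%:R * (s * r).
Proof.
move=> hp hx; apply: le_trans (ler_norm_sum _ _ _) _.
have -> : d%:R * (s * r) = \sum_(i < d) s * r by rewrite sumr_const card_ord mulr_natl.
apply: ler_sum => i _.
rewrite normrM; have := hp i; have := hx i.
have := normr_ge0 (p 0 i); have := normr_ge0 (x 0 i); nra.
Qed.

Lemma gaussian_shift p x :
  expR (2 * sqnorm p) * expR (- (1/3) * sqnorm (x - 3 *: p)) =
  expR (- (1/3) * sqnorm x) * (expR (- sqnorm p) * expR (2 * dotp p x)).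
Proof. by rewrite -!expRD sqnorm_sub_scale; congr expR; field. Qed.

Lemma calP_exp_taylor P (sigma : 'rV[R]_d -> R) (rho : nat) x :
  calP P sigma rho x =
  \sum_(p <- P) sigma p * expR (- sqnorm p) * exp_taylor (2 * dotp p x) rho.+1.
Proof.
rewrite /calP; under eq_bigr do rewrite mulr_sumr.
rewrite exchange_big /=; apply: eq_bigr => p _.
rewrite /exp_taylor mulr_sumr; apply: eq_bigr => k _; rewrite exprMn; ring.
Qed.

Lemma gaussian_sum_error P (sigma : 'rV[R]_d -> R) (rho : nat) x :
  \sum_(p <- P) sigma p * expR (2 * sqnorm p) * expR (- (1/3) * sqnorm (x - 3 *: p))
    - expR (- (1/3) * sqnorm x) * calP P sigma rho x
  = expR (- (1/3) * sqnorm x) * \sum_(p <- P) sigma p * expR (- sqnorm p)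
      * (expR (2 * dotp p x) - exp_taylor (2 * dotp p x) rho.+1).
Proof.
rewrite calP_exp_taylor; set g := expR (- (1/3) * sqnorm x).
rewrite !mulr_sumr -sumrB; apply: eq_bigr => p _.
by rewrite -(mulrA (sigma p)) gaussian_shift -/g; ring.
Qed.

(* Each summand of the error is at most 1/n: the weight s e^(-||p||^2) has
   modulus at most 1, and the degree bound on rho makes the Taylor remainder
   at t = 2<p,x> at most e^(-ln n) = 1/n. *)
Lemma weighted_taylor_error (n rho : nat) (r s : R) p x : (0 < n)%N ->
  `|s| <= 1 -> in_Binf 1 p -> in_Binf r x ->
  2 * expR 1 ^+ 2 * d%:R * r + ln (n%:R : R) + 2 * d%:R <= rho%:R + 1 ->
  `|s * expR (- sqnorm p)
      * (expR (2 * dotp p x) - exp_taylor (2 * dotp p x) rho.+1)| <= n%:R^-1.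
Proof.
move=> n_gt0 s_le1 hp hx hrho.
have weight_le1 : `|s * expR (- sqnorm p)| <= 1.
  have e_le1 : expR (- sqnorm p) <= 1 by rewrite expR_le1 oppr_le0 sqnorm_ge0.
  rewrite normrM (ger0_norm (expR_ge0 _)).
  by apply: le_trans (ler_pM (normr_ge0 s) (expR_ge0 _) s_le1 e_le1) _; rewrite mulr1.
have budget : expR 1 ^+ 2 * `|2 * dotp p x| + ln (n%:R : R) <= rho.+1%:R.
  have dot_le := dotp_Binf_bound _ _ _ _ hp hx; rewrite mul1r in dot_le.
  have e2_ge0 : 0 <= expR (1 : R) ^+ 2 by rewrite exprn_ge0 ?expR_ge0.
  have := ler_wpM2l e2_ge0 dot_le; have : 0 <= d%:R :> R by [].
  rewrite normrM ger0_norm // -addn1 natrD; lra.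
have := exp_taylor_error _ _ _ (ltn0Sn rho) budget.
rewrite expRN lnK ?posrE ?ltr0n // => remainder_le.
rewrite normrM -[_^-1]mul1r.
exact: ler_pM (normr_ge0 _) (normr_ge0 _) weight_le1 remainder_le.
Qed.
End GaussianSum.

Lemma sum_le_size_mul (T : eqType) (s : seq T) (f : T -> R) (b : R) :
  (forall i, i \in s -> f i <= b) -> \sum_(i <- s) f i <= (size s)%:R * b.
Proof.
move=> f_le; rewrite mulr_natl -(count_predT s) -iter_addr_0 -big_const_seq.
by rewrite big_seq [X in _ <= X]big_seq; apply: ler_sum.
Qed.
End GaussianTaylor.
Arguments exp_taylor {R} t K.

Theorem mainTheorem4 (R : realType) (d n : nat) (P : seq 'rV[R]_d)
  (sigma : 'rV[R]_d -> R) (rho : nat) :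
  (2 <= n)%N ->
  uniq P -> size P = n ->
  (forall p, p \in P -> in_Binf 1 p) ->
  (forall p, p \in P -> sigma p = 1 \/ sigma p = -1) ->
  2 * expR (1 : R) ^+ 2 * d%:R * (Num.sqrt (3 * ln (n%:R : R)) + 3) + ln (n%:R : R) + 2 * d%:R
    <= rho%:R + 1 ->
  forall x : 'rV[R]_d, in_Binf (Num.sqrt (3 * ln (n%:R : R)) + 3) x ->
  `| \sum_(p <- P) sigma p * expR (2 * sqnorm p)
        * expR (- (1/3) * sqnorm (x - 3 *: p))
     - expR (- (1/3) * sqnorm x) * calP P sigma rho x | <= 1.
Proof.
move=> n_ge2 _ sizeP inP sign rho_ge x inx.
have n_gt0 : (0 < n)%N by apply: leq_trans n_ge2.
rewrite gaussian_sum_error normrM.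
have gauss_le1 : `|expR (- (1/3) * sqnorm x)| <= 1.
  rewrite ger0_norm ?expR_ge0 // expR_le1.
  by rewrite mulNr oppr_le0 mulr_ge0 ?sqnorm_ge0.
have error_le1 : `|\sum_(p <- P) sigma p * expR (- sqnorm p)
    * (expR (2 * dotp p x) - exp_taylor (2 * dotp p x) rho.+1)| <= 1.
  apply: le_trans (ler_norm_sum _ _ _) _.
  apply: le_trans (@sum_le_size_mul R _ P _ n%:R^-1 _) _.
    move=> p pP; apply: weighted_taylor_error => //; last exact: inP.
    by case: (sign p pP) => ->; rewrite ?normrN normr1.
  by rewrite sizeP mulfV // pnatr_eq0 -lt0n.
by apply: le_trans (ler_pM (normr_ge0 _) (normr_ge0 _) gauss_le1 error_le1) _; rewrite mulr1.
Qed.
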